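(* Let $G$ be a group and $A$ an additive abelian group with a right $G$-action by group automorphisms. For any $a\in A$, $n\in\mathbb N$ and $g_1,\dots,g_n\in G$, $$[D^na](g_1,\dots,g_n)=a^{g_1\cdots g_n}+\sum_{s=1}^{n-1}(-1)^s\sum_{1\le i_1<\dots<i_s\le n}a^{\pi_{i_1,\dots,i_s}(g_1,\dots,g_n)}+(-1)^na.$$
   Context: Right action: $a\mapsto a^g$, $a^{\mathbf e}=a$, $(a^g)^h=a^{gh}$, additive in $a$. $\mathcal C^0(G,A)=A$; for $n\ge1$, $\mathcal C^n(G,A)$ consists of functions $G^n\to A$ vanishing whenever some argument is the identity $\mathbf e$. For $n\ge1$, $(d_nc)(g_1,\dots,g_n)=[c(g_1,\dots,g_{n-1})]^{g_n}-c(g_1,\dots,g_{n-1})$ for $c\in\mathcal C^{n-1}(G,A)$; $D^0=\mathrm{id}_A$, $D^n=d_nD^{n-1}$. For $1\le i_1<\dots<i_s\le n$, $\pi_{i_1,\dots,i_s}(g_1,\dots,g_n)$ is the ordered product $g_1\cdots g_n$ with the factors $g_{i_1},\dots,g_{i_s}$ omitted (the empty product being $\mathbf e$). *)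

From HB Require Import structures.
From mathcomp Require Import all_boot all_order all_algebra.
Set Implicit Arguments. Unset Strict Implicit. Unset Printing Implicit Defensive.
Import GRing.Theory.
Local Open Scope ring_scope.

Unset Implicit Arguments.
Section Cochains.
Variables (G : groupType) (A : zmodType) (act : A -> G -> A).

(* The normalization condition (vanishing when an argument is the identity)
   is preserved by d_n and plays no role in the values computed below. *)
Definition cochain (n : nat) := ('I_n -> G) -> A.

Definition normalized n (c : cochain n) : Prop :=
  forall g : 'I_n -> G, (exists i, g i = 1%g) -> c g = 0.

Definition dcoch (n : nat) (c : cochain n) : cochain n.+1 :=
  fun g => act (c (fun i => g (widen_ord (leqnSn n) i))) (g ord_max)
           - c (fun i => g (widen_ord (leqnSn n) i)).

Fixpoint Dn (n : nat) : A -> cochain n :=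
  match n with
  | 0 => fun a _ => a
  | m.+1 => fun a => dcoch m (Dn m a)
  end.

Definition pi_omit (n : nat) (S : {set 'I_n}) (g : 'I_n -> G) : G :=
  (\prod_(i < n | i \notin S) g i)%g.

End Cochains.

(* Unfolding [D^(n+1) = d_(n+1) D^n] one step at a time gives
   [D^n a (g) = \sum_S (-1)^|S| a^(pi_S g)], S ranging over all subsets of
   {1, ..., n}: splitting the subsets of {1, ..., n+1} according to whether
   they contain n+1, acting by g_(n+1) appends g_(n+1) to every product (the
   subsets avoiding n+1), while subtracting [D^n a] contributes the same
   products with g_(n+1) omitted and one more sign (the subsets containing
   n+1).  Grouping the terms by |S|, the only subsets of size 0 and n give
   a^(g_1...g_n) and (-1)^n a. *)
From HB Require Import structures.
From mathcomp Require Import all_boot all_order all_algebra.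
Import GRing.Theory.
Local Open Scope ring_scope.

Set Implicit Arguments.
Unset Strict Implicit.
Unset Printing Implicit Defensive.

Section SetsOfOrdinals.
Variable n : nat.

Local Notation widen := (widen_ord (leqnSn n)).

Definition widen_set (S : {set 'I_n}) : {set 'I_n.+1} := widen @: S.

Definition restrict_set (T : {set 'I_n.+1}) : {set 'I_n} := [set i | widen i \in T].

Lemma widen_ord_inj : injective widen.
Proof. by move=> i j /(congr1 val) /= /val_inj. Qed.

Lemma widen_ord_neq_max i : widen i != ord_max.
Proof. by rewrite -val_eqE /= neq_ltn ltn_ord. Qed.

Lemma set_ord_maxP (T1 T2 : {set 'I_n.+1}) :
  (ord_max \in T1) = (ord_max \in T2) ->
  (forall i, (widen i \in T1) = (widen i \in T2)) -> T1 = T2.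
Proof.
move=> eq_max eq_widen; apply/setP => j; case: (unliftP ord_max j) => [i ->|-> //].
rewrite (_ : lift _ i = widen i) ?eq_widen //.
by apply: val_inj; rewrite /= /bump leqNgt ltn_ord.
Qed.

Lemma mem_widen_set S i : (widen i \in widen_set S) = (i \in S).
Proof. exact/mem_imset/widen_ord_inj. Qed.

Lemma ord_max_notin_widen_set S : ord_max \notin widen_set S.
Proof. by apply/imsetP => -[i _ /eqP]; rewrite eq_sym (negbTE (widen_ord_neq_max i)). Qed.

Lemma card_widen_set S : #|widen_set S| = #|S|.
Proof. exact/card_imset/widen_ord_inj. Qed.

Lemma widen_setK : cancel widen_set restrict_set.
Proof. by move=> S; apply/setP => i; rewrite inE mem_widen_set. Qed.

Lemma setU1_max_widen_setK : cancel (fun S => ord_max |: widen_set S) restrict_set.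
Proof.
by move=> S; apply/setP => i; rewrite !inE (negbTE (widen_ord_neq_max i)) mem_widen_set.
Qed.

Lemma restrict_setK (T : {set 'I_n.+1}) :
  ord_max \notin T -> widen_set (restrict_set T) = T.
Proof.
move=> /negbTE T_max; apply: set_ord_maxP => [|i].
  by rewrite T_max (negbTE (ord_max_notin_widen_set _)).
by rewrite mem_widen_set inE.
Qed.

Lemma restrict_set_maxK (T : {set 'I_n.+1}) :
  ord_max \in T -> ord_max |: widen_set (restrict_set T) = T.
Proof.
move=> T_max; apply: set_ord_maxP => [|i]; first by rewrite setU11.
by rewrite !inE (negbTE (widen_ord_neq_max i)) mem_widen_set inE.
Qed.

Lemma big_set_ord_recr (R : Type) (idx : R) (op : Monoid.com_law idx)
    (F : {set 'I_n.+1} -> R) :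
  \big[op/idx]_(T : {set 'I_n.+1}) F T =
  op (\big[op/idx]_(S : {set 'I_n}) F (widen_set S))
     (\big[op/idx]_(S : {set 'I_n}) F (ord_max |: widen_set S)).
Proof.
rewrite (bigID (fun T : {set 'I_n.+1} => ord_max \in T)) /= Monoid.mulmC; congr (op _ _).
  rewrite (reindex widen_set) /=; last first.
    exists restrict_set => [S _|T]; first exact: widen_setK.
    by rewrite inE => /restrict_setK.
  by apply: eq_bigl => S; rewrite ord_max_notin_widen_set.
rewrite (reindex (fun S => ord_max |: widen_set S)) /=; last first.
  exists restrict_set => [S _|T]; first exact: setU1_max_widen_setK.
  by rewrite inE => /restrict_set_maxK.
by apply: eq_bigl => S; rewrite setU11.
Qed.

End SetsOfOrdinals.

Lemma cards_eqT (T : finType) (S : {set T}) : (#|S| == #|T|) = (S == setT).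
Proof. by rewrite eqEcard subsetT cardsT eqn_leq max_card. Qed.

Lemma big_set_by_card (R : Type) (idx : R) (op : Monoid.com_law idx)
    (T : finType) (F : {set T} -> R) :
  \big[op/idx]_(S : {set T}) F S =
  \big[op/idx]_(0 <= s < #|T|.+1) \big[op/idx]_(S : {set T} | #|S| == s) F S.
Proof.
pose card_of (S : {set T}) : 'I_#|T|.+1 := inord #|S|.
rewrite big_mkord (partition_big card_of xpredT) //=.
apply: eq_bigr => s _; apply: eq_bigl => S.
by rewrite -val_eqE /= inordK // ltnS max_card.
Qed.

Section OmittedProducts.
Variable G : groupType.

Lemma pi_omit_set0 n (g : 'I_n -> G) : pi_omit G n set0 g = (\prod_(i < n) g i)%g.
Proof. by apply: eq_bigl => i; rewrite inE. Qed.

Lemma pi_omit_setT n (g : 'I_n -> G) : pi_omit G n setT g = 1%g.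
Proof. by rewrite /pi_omit big_pred0 // => i; rewrite inE. Qed.

Lemma pi_omit_widen_set n (S : {set 'I_n}) (g : 'I_n.+1 -> G) :
  pi_omit G n.+1 (widen_set S) g =
  (pi_omit G n S (fun i => g (widen_ord (leqnSn n) i)) * g ord_max)%g.
Proof.
rewrite /pi_omit big_mkcond big_ord_recr /= -big_mkcond.
rewrite (negbTE (ord_max_notin_widen_set S)).
by under eq_bigl => i do rewrite mem_widen_set.
Qed.

Lemma pi_omit_setU1_max n (S : {set 'I_n}) (g : 'I_n.+1 -> G) :
  pi_omit G n.+1 (ord_max |: widen_set S) g =
  pi_omit G n S (fun i => g (widen_ord (leqnSn n) i)).
Proof.
rewrite /pi_omit big_mkcond big_ord_recr /= -big_mkcond setU11 mulg1.
apply: eq_bigl => i; rewrite !inE mem_widen_set.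
by rewrite (negbTE (widen_ord_neq_max i)).
Qed.

End OmittedProducts.

Section AdditiveAction.
Variables (G : groupType) (A : zmodType) (act : A -> G -> A).
Hypothesis act1 : forall a : A, act a 1%g = a.
Hypothesis actM : forall (a : A) (g h : G), act (act a g) h = act a (g * h)%g.
Hypothesis actD : forall (a b : A) (g : G), act (a + b) g = act a g + act b g.

Definition act_by (g : G) (a : A) : A := act a g.

Lemma act_by_is_nmod_morphism g : nmod_morphism (act_by g).
Proof.
split=> [|a b]; last exact: actD.
by apply: (addrI (act 0 g)); rewrite /act_by -actD !addr0.
Qed.

HB.instance Definition _ g :=
  GRing.isNmodMorphism.Build A A (act_by g) (act_by_is_nmod_morphism g).

Lemma act_sum g I r (P : pred I) (F : I -> A) :
  act (\sum_(i <- r | P i) F i) g = \sum_(i <- r | P i) act (F i) g.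
Proof. exact: (raddf_sum (act_by g)). Qed.

Lemma act_mulrz g a (z : int) : act (a *~ z) g = act a g *~ z.
Proof. exact: (raddfMz (act_by g)). Qed.

Lemma Dn_sum_subsets n a (g : 'I_n -> G) :
  Dn G A act n a g = \sum_(S : {set 'I_n}) act a (pi_omit G n S g) *~ (-1) ^+ #|S|.
Proof.
elim: n g => [|n IHn] g.
  rewrite (big_pred1 set0) => [|S]; last by apply/esym/eqP/setP => -[].
  by rewrite pi_omit_set0 big_ord0 cards0 act1.
rewrite /= /dcoch !IHn big_set_ord_recr; congr (_ + _).
  rewrite act_sum; apply: eq_bigr => S _.
  by rewrite act_mulrz actM pi_omit_widen_set card_widen_set.
rewrite -sumrN; apply: eq_bigr => S _.
rewrite pi_omit_setU1_max cardsU1 ord_max_notin_widen_set card_widen_set.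
by rewrite exprS mulN1r mulrNz.
Qed.

End AdditiveAction.

Theorem lemma1p3 (G : groupType) (A : zmodType) (act : A -> G -> A)
  (act1 : forall a : A, act a 1%g = a)
  (actM : forall (a : A) (g h : G), act (act a g) h = act a (g * h)%g)
  (actD : forall (a b : A) (g : G), act (a + b) g = act a g + act b g)
  (a : A) (n : nat) (hn : (0 < n)%N) (g : 'I_n -> G) :
  Dn G A act n a g =
    act a (\prod_(i < n) g i)%g
    + \sum_(1 <= s < n)
        ((\sum_(S : {set 'I_n} | #|S| == s) act a (pi_omit G n S g)) *~ ((-1) ^+ s))
    + a *~ ((-1) ^+ n).
Proof.
have sign_out s :
    \sum_(S : {set 'I_n} | #|S| == s) act a (pi_omit G n S g) *~ (-1) ^+ #|S| =
    (\sum_(S : {set 'I_n} | #|S| == s) act a (pi_omit G n S g)) *~ (-1) ^+ s.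
  by rewrite mulrz_suml; apply: eq_bigr => S /eqP ->.
rewrite (Dn_sum_subsets act1 actM actD) big_set_by_card card_ord.
rewrite (eq_bigr _ (fun s _ => sign_out s)).
rewrite big_nat_recr // big_ltn //; congr (_ + _ + _).
  rewrite (big_pred1 set0) => [|S]; last by rewrite cards_eq0.
  by rewrite pi_omit_set0 expr0 mulr1z.
rewrite (big_pred1 setT) => [|S]; last by rewrite /= -cards_eqT card_ord.
by rewrite pi_omit_setT act1.
Qed.
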